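(* Let $\mathfrak g$ be a Lie algebra over a field $\mathbb k$ and $X$ its associated binary SD object. The homomorphism $\Psi^2\colon H^2_{\rm Lie}(\mathfrak g;\mathfrak g)\to H^2_{\rm BSD}(X;X)$ induced by $\phi\mapsto[(a,x)\otimes(b,y)\mapsto(0,\phi(x,y))]$ is injective. If in addition $\mathfrak g$ has trivial center, $\Psi^2$ is an isomorphism $H^2_{\rm Lie}(\mathfrak g;\mathfrak g)\cong H^2_{\rm BSD}(X;X)$.
   Context: Associated binary SD object: $X=\mathbb k\oplus\mathfrak g$, $\Delta(a,x)=(a,x)\otimes(1,0)+(1,0)\otimes(0,x)$, $\varepsilon(a,x)=a$, $q((a,x)\otimes(b,y))=(ab,bx+[x,y])$; Sweedler $\Delta(w)=w^{(1)}\otimes w^{(2)}$; $\tau$ the flip. BSD cohomology: $C^1_{\rm BSD}$ = linear $f\colon X\to X$ with $\Delta f=(f\otimes\mathbb 1+\mathbb 1\otimes f)\Delta$; $C^2_{\rm BSD}$ = linear $\phi\colon X\otimes X\to X$ with $\Delta\phi=(\phi\otimes q+q\otimes\phi)(\mathbb 1\otimes\tau\otimes\mathbb 1)(\Delta\otimes\Delta)$; $\delta^1f(u\otimes v)=f(q(u\otimes v))-q(f(u)\otimes v)-q(u\otimes f(v))$; $\delta^2\phi(u\otimes v\otimes w)=q(\phi(u\otimes v)\otimes w)+\phi(q(u\otimes v)\otimes w)-\phi(q(u\otimes w^{(1)})\otimes q(v\otimes w^{(2)}))-q(\phi(u\otimes w^{(1)})\otimes q(v\otimes w^{(2)}))-q(q(u\otimes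 w^{(1)})\otimes\phi(v\otimes w^{(2)}))$; $H^2_{\rm BSD}=(C^2_{\rm BSD}\cap\ker\delta^2)/\delta^1(C^1_{\rm BSD})$. Lie cohomology: $2$-cochains are alternating bilinear $\phi\colon\mathfrak g\times\mathfrak g\to\mathfrak g$; $\delta^2\phi(x,y,z)=[\phi(x,y),z]+[\phi(y,z),x]+[\phi(z,x),y]+\phi([x,y],z)+\phi([y,z],x)+\phi([z,x],y)$; $\delta^1f(x,y)=f([x,y])-[f(x),y]-[x,f(y)]$ for linear $f\colon\mathfrak g\to\mathfrak g$; $H^2_{\rm Lie}=\ker\delta^2/\operatorname{im}\delta^1$. *)

From HB Require Import structures.
From mathcomp Require Import all_boot all_algebra.
Set Implicit Arguments. Unset Strict Implicit. Unset Printing Implicit Defensive.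
Import GRing.Theory.
Local Open Scope ring_scope.

Section BSD.
Variables (k : fieldType).

Definition klin (U W : lmodType k) (f : U -> W) : Prop :=
  forall (a : k) (u v : U), f (a *: u + v) = a *: f u + f v.

Definition kbilin (U W Z : lmodType k) (B : U -> W -> Z) : Prop :=
  (forall w : W, klin (fun u => B u w)) /\ (forall u : U, klin (B u)).

Variable (V : lmodType k).

Definition is_lie_bracket (br : V -> V -> V) : Prop :=
  kbilin br /\ (forall x, br x x = 0) /\
  (forall x y z, br (br x y) z + br (br y z) x + br (br z x) y = 0).

Definition trivial_center (br : V -> V -> V) : Prop :=
  forall z, (forall x, br z x = 0) -> z = 0.

Definition lie_delta1 (br : V -> V -> V) (f : V -> V) (x y : V) : V :=
  f (br x y) - br (f x) y - br x (f y).

Definition lie_delta2 (br : V -> V -> V) (phi : V -> V -> V) (x y z : V) : V :=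
  br (phi x y) z + br (phi y z) x + br (phi z x) y
  + phi (br x y) z + phi (br y z) x + phi (br z x) y.

Definition lie_cochain2 (phi : V -> V -> V) : Prop :=
  kbilin phi /\ (forall x, phi x x = 0).

Definition lie_cocycle (br : V -> V -> V) (phi : V -> V -> V) : Prop :=
  lie_cochain2 phi /\ (forall x y z, lie_delta2 br phi x y z = 0).

Definition lie_coboundary (br : V -> V -> V) (phi : V -> V -> V) : Prop :=
  exists f : V -> V, klin f /\ (forall x y, phi x y = lie_delta1 br f x y).

Definition SDX : lmodType k := (k^o * V)%type.

Definition unitX : SDX := (1 : k^o, 0 : V).

(* Delta(a,x) = (a,x) (x) (1,0) + (1,0) (x) (0,x), as a formal sum of pure tensors *)
Definition DeltaX (u : SDX) : seq (SDX * SDX) :=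
  [:: (u, unitX); (unitX, ((0 : k^o), u.2) : SDX)].

Definition qX (br : V -> V -> V) (u v : SDX) : SDX :=
  ((u.1 * v.1 : k) : k^o, v.1 *: u.2 + br u.2 v.2).

(* Equality in X (x) X of two formal sums of pure tensors: since X is a vector
   space over a field, bilinear forms X x X -> k separate the points of X (x) X. *)
Definition teq (s t : seq (SDX * SDX)) : Prop :=
  forall B : SDX -> SDX -> k^o, kbilin B ->
    \sum_(p <- s) B p.1 p.2 = \sum_(p <- t) B p.1 p.2.

(* C^1_BSD : linear f with Delta f = (f (x) 1 + 1 (x) f) Delta *)
Definition bsd_C1 (f : SDX -> SDX) : Prop :=
  klin f /\
  forall u : SDX,
    teq (DeltaX (f u))
        ([seq (f p.1, p.2) | p <- DeltaX u] ++ [seq (p.1, f p.2) | p <- DeltaX u]).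

(* C^2_BSD : linear phi : X (x) X -> X (i.e. bilinear X x X -> X) with
   Delta phi = (phi (x) q + q (x) phi)(1 (x) tau (x) 1)(Delta (x) Delta) *)
Definition bsd_C2 (br : V -> V -> V) (phi : SDX -> SDX -> SDX) : Prop :=
  kbilin phi /\
  forall u v : SDX,
    teq (DeltaX (phi u v))
        (flatten [seq [:: (phi p.1 r.1, qX br p.2 r.2); (qX br p.1 r.1, phi p.2 r.2)]
                 | p <- DeltaX u, r <- DeltaX v]).

Definition bsd_delta1 (br : V -> V -> V) (f : SDX -> SDX) (u v : SDX) : SDX :=
  f (qX br u v) - qX br (f u) v - qX br u (f v).

Definition bsd_delta2 (br : V -> V -> V) (phi : SDX -> SDX -> SDX) (u v w : SDX) : SDX :=
  qX br (phi u v) w + phi (qX br u v) w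
  - \sum_(p <- DeltaX w)
      (phi (qX br u p.1) (qX br v p.2)
       + qX br (phi u p.1) (qX br v p.2)
       + qX br (qX br u p.1) (phi v p.2)).

Definition bsd_cocycle (br : V -> V -> V) (phi : SDX -> SDX -> SDX) : Prop :=
  bsd_C2 br phi /\ (forall u v w, bsd_delta2 br phi u v w = 0).

Definition bsd_coboundary (br : V -> V -> V) (phi : SDX -> SDX -> SDX) : Prop :=
  exists f : SDX -> SDX, bsd_C1 f /\ (forall u v, phi u v = bsd_delta1 br f u v).

Definition PsiX (phi : V -> V -> V) (u v : SDX) : SDX := ((0 : k^o), phi u.2 v.2).

End BSD.

(* Psi keeps only the g-components: phi becomes (a,x) (x) (b,y) |-> (0, phi(x,y)) and
   a linear f becomes (a,x) |-> (0, f x).  On such cochains the BSD differentials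
   are the Lie differentials, which makes Psi a well defined map on H^2.
   Injectivity: testing the comultiplicativity of a BSD 1-cochain F against the
   counit eps (x) eps shows that F has no k-component on g, so x |-> F(0,x).2 is a
   Lie 1-cochain with the same coboundary.
   Surjectivity: eps (x) eps likewise kills the k-component of a BSD 2-cocycle psi.
   With trivial center, the cocycle identity at (1,1,z), (x,1,z) and (x,y,1) kills
   psi(1,1) and psi(x,1), and comultiplicativity tested against l1 (x) l2 for linear
   functionals l1, l2 (which exist by Zorn's lemma) kills psi(1,y).  So psi equals
   Psi(phi) on the nose, with phi(x,y) = psi((0,x),(0,y)).2, and the BSD cocycle
   identity for Psi(phi) is the Lie cocycle identity for phi. *)

From HB Require Import structures.
From mathcomp Require Import all_boot all_algebra.
From mathcomp Require Import boolp classical_sets.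
Set Implicit Arguments. Unset Strict Implicit. Unset Printing Implicit Defensive.
Import GRing.Theory.
Local Open Scope ring_scope.

Section LinearMaps.
Variable k : fieldType.

Section Klin.
Variables (U W : lmodType k) (f : U -> W).
Hypothesis f_lin : klin f.

Lemma klinD u v : f (u + v) = f u + f v.
Proof. by rewrite -[u in LHS]scale1r f_lin scale1r. Qed.

Lemma klin0 : f 0 = 0.
Proof. by apply: (addIr (f 0)); rewrite add0r -klinD addr0. Qed.

Lemma klinZ a u : f (a *: u) = a *: f u.
Proof. by rewrite -[a *: u]addr0 f_lin klin0 addr0. Qed.

Lemma klinN u : f (- u) = - f u.
Proof. by rewrite -scaleN1r klinZ scaleN1r. Qed.

Lemma klinB u v : f (u - v) = f u - f v.
Proof. by rewrite klinD klinN. Qed.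

End Klin.

Section Kbilin.
Variables (U W Z : lmodType k) (g : U -> W -> Z).
Hypothesis g_bilin : kbilin g.

Lemma kbilin0l y : g 0 y = 0. Proof. exact: (klin0 (g_bilin.1 y)). Qed.
Lemma kbilin0r x : g x 0 = 0. Proof. exact: (klin0 (g_bilin.2 x)). Qed.
Lemma kbilinDl x1 x2 y : g (x1 + x2) y = g x1 y + g x2 y.
Proof. exact: (klinD (g_bilin.1 y)). Qed.
Lemma kbilinDr x y1 y2 : g x (y1 + y2) = g x y1 + g x y2.
Proof. exact: (klinD (g_bilin.2 x)). Qed.
Lemma kbilinZl a x y : g (a *: x) y = a *: g x y.
Proof. exact: (klinZ (g_bilin.1 y)). Qed.
Lemma kbilinZr a x y : g x (a *: y) = a *: g x y.
Proof. exact: (klinZ (g_bilin.2 x)). Qed.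
Lemma kbilinNl x y : g (- x) y = - g x y. Proof. exact: (klinN (g_bilin.1 y)). Qed.

End Kbilin.

Lemma kbilin_anti (U Z : lmodType k) (g : U -> U -> Z) :
  kbilin g -> (forall x, g x x = 0) -> forall x y, g y x = - g x y.
Proof.
move=> gB g_alt x y; apply/eqP; rewrite -addr_eq0 addrC; apply/eqP.
by have := g_alt (x + y); rewrite (kbilinDl gB) !(kbilinDr gB) !g_alt add0r addr0.
Qed.

End LinearMaps.

Section LinearFunctionals.
Variables (k : fieldType) (V : lmodType k).

Definition lin_closed (S : set V) := forall a u v, S u -> S v -> S (a *: u + v).

Lemma exists_maximal_lin_closed (w : V) :
  exists A : set V, [/\ lin_closed A, ~ A w &
    forall B, (A `<` B)%classic -> lin_closed B -> B w].
Proof.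
have [|A [[A_cl Aw] A_max]] := @Zorn_bigcup V (fun S => lin_closed S /\ ~ S w).
  move=> F FP F_tot; split; last by case=> X FX; apply: (FP _ FX).2.
  move=> a u v [X FX Xu] [Y FY Yv].
  have [XY|YX] := F_tot _ _ FX FY.
  - by exists Y => //; apply: (FP _ FY).1 => //; apply: XY.
  - by exists X => //; apply: (FP _ FX).1 => //; apply: YX.
exists A; split=> // B AB B_cl; apply: contrapT => Bw; exact: A_max AB (conj B_cl Bw).
Qed.

Section MaximalSubspace.
Variables (w : V) (A : set V).
Hypotheses (w_neq0 : w != 0) (A_cl : lin_closed A) (Aw : ~ A w)
  (A_max : forall B, (A `<` B)%classic -> lin_closed B -> B w).

Lemma maximal_lin_closed0 : A 0.
Proof.
apply: contrapT => nA0; suff : [set 0%R]%classic w by move/eqP: w_neq0.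
apply: A_max.
- split=> [u Au|]; first by case: nA0; have := A_cl (-1) Au Au; rewrite scaleN1r addNr.
  by move=> /(_ 0 erefl).
- by move=> a u v -> ->; rewrite scaler0 addr0.
Qed.

Lemma maximal_lin_closedZ a u : A u -> A (a *: u).
Proof. by move=> Au; have := A_cl a Au maximal_lin_closed0; rewrite addr0. Qed.

Lemma maximal_lin_closed_coset v : exists c : k, A (v - c *: w).
Proof.
have [Av|nAv] := pselect (A v); first by exists 0; rewrite scale0r subr0.
pose B y := exists m t, A m /\ y = m + t *: v.
have [m [t [Am wE]]] : B w.
  apply: A_max.
    split=> [u Au|]; first by exists u, 0; rewrite scale0r addr0; split.
    move=> BA; apply: nAv; apply: BA; exists 0, 1.
    by rewrite scale1r add0r; split=> //; apply: maximal_lin_closed0.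
  move=> a _ _ [m1 [t1 [Am1 ->]]] [m2 [t2 [Am2 ->]]].
  exists (a *: m1 + m2), (a * t1 + t2); split; first exact: A_cl.
  by rewrite scalerDr scalerDl scalerA addrACA.
have t_neq0 : t != 0 by apply: contra_notN Aw => /eqP t0; rewrite wE t0 scale0r addr0.
exists t^-1; rewrite wE scalerDr scalerA mulVf // scale1r opprD addrCA subrr addr0.
by rewrite -scaleNr; apply: maximal_lin_closedZ.
Qed.

Lemma maximal_lin_closed_coset_uniq v c1 c2 :
  A (v - c1 *: w) -> A (v - c2 *: w) -> c1 = c2.
Proof.
move=> A1 A2; apply/eqP; apply: contraT => c12; case: Aw.
have := maximal_lin_closedZ (c2 - c1)^-1 (A_cl (-1) A2 A1).
rewrite scaleN1r opprB addrA subrK -scalerBl scalerA mulVf ?scale1r //.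
by rewrite subr_eq0 eq_sym.
Qed.

End MaximalSubspace.

(* [l v] is the unique [c] such that [v - c w] lies in a maximal subspace avoiding [w]. *)
Lemma exists_functional (w : V) : w != 0 -> exists l : V -> k^o, klin l /\ l w = 1.
Proof.
move=> w_neq0; have [A [A_cl Aw A_max]] := exists_maximal_lin_closed w.
have coset := maximal_lin_closed_coset w_neq0 A_cl Aw A_max.
have uniq := maximal_lin_closed_coset_uniq w_neq0 A_cl Aw A_max.
pose l v : k^o := projT1 (cid (coset v)).
have lP v : A (v - l v *: w) by rewrite /l; case: cid.
exists l; split.
  move=> a u v; apply: (uniq (a *: u + v)) => //.
  have := A_cl a _ _ (lP u) (lP v).
  by rewrite scalerBr scalerA addrACA -opprD -scalerDl.
apply: (uniq w) => //; rewrite scale1r subrr; exact: (maximal_lin_closed0 w_neq0).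
Qed.

Lemma exists_functional_indep (w x : V) : w != 0 -> (forall c : k, x != c *: w) ->
  exists l : V -> k^o, [/\ klin l, l w = 0 & l x = 1].
Proof.
move=> w_neq0 x_indep; have [l1 [l1_lin l1w]] := exists_functional w_neq0.
have [l2 [l2_lin l2x]] : exists l2 : V -> k^o, klin l2 /\ l2 (x - l1 x *: w) = 1.
  by apply: exists_functional; rewrite subr_eq0 x_indep.
exists (fun v => l2 v - l2 w * l1 v); split.
- move=> a u v; rewrite l1_lin l2_lin /GRing.scale /=.
  by rewrite mulrDr opprD addrACA mulrCA -mulrBr.
- by rewrite l1w mulr1 subrr.
- by rewrite -l2x (klinB l2_lin) (klinZ l2_lin) mulrC.
Qed.

End LinearFunctionals.

Lemma addr_eq_self (Z : zmodType) (x y : Z) : x = x + y -> y = 0.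
Proof. by rewrite -{1}[x]addr0 => /addrI/esym. Qed.

(* Closes [s = 0] when, after pushing opposites inward, the summands of [s]
   cancel in pairs [t], [- t]. *)
Ltac move_to_front t :=
  try rewrite [in LHS](addrC _ t); repeat rewrite [in LHS](addrCA _ t).

Ltac cancel_pairs :=
  rewrite ?opprD ?opprK -?addrA;
  repeat progress (match goal with
    | |- - ?x + _ = 0 => move_to_front x
    | |- ?x + _ = 0 => move_to_front (- x)
    end; rewrite ?addNKr ?addKr ?addNr ?addrN);
  reflexivity.

Ltac zmod_eq := apply/eqP; rewrite -subr_eq0; apply/eqP; cancel_pairs.

Ltac zmod_eq_from E := apply: subr0_eq; rewrite -[RHS]E; zmod_eq.

Section BinarySD.
Variables (k : fieldType) (V : lmodType k).

Local Notation X := (SDX V).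
Local Notation e := (unitX V).

Lemma pair0_linear a x y : ((0, a *: x + y) : X) = a *: (0, x) + (0, y).
Proof. by apply: injective_projections; rewrite /= ?scaler0 ?addr0. Qed.

Lemma pairX_decomp (u : X) : u = u.1 *: e + (0, u.2).
Proof.
apply: injective_projections; rewrite /= ?(scaler0, scale0r, addr0, add0r) //.
by rewrite -[RHS]/(u.1 * 1) mulr1.
Qed.

Lemma kbilin_decompX (psi : X -> X -> X) u v : kbilin psi ->
  psi u v = u.1 *: (v.1 *: psi e e + psi e (0, v.2))
            + (v.1 *: psi (0, u.2) e + psi (0, u.2) (0, v.2)).
Proof.
move=> psiB; rewrite {1}(pairX_decomp u) {1}(pairX_decomp v).
by rewrite (kbilinDl psiB) (kbilinZl psiB) !(kbilinDr psiB) !(kbilinZr psiB).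
Qed.

Lemma PsiX_kbilin (phi : V -> V -> V) : kbilin (PsiX phi) <-> kbilin phi.
Proof.
split=> [[phiBl phiBr]|phiB].
  by split=> [y a x1 x2|x a y1 y2];
    [have := phiBl (0, y) a (0, x1) (0, x2) | have := phiBr (0, x) a (0, y1) (0, y2)];
    move=> /(congr1 snd).
split=> [w a u v|u a v w]; apply: injective_projections; rewrite /PsiX /= ?scaler0 ?addr0 //.
  by rewrite (kbilinDl phiB) (kbilinZl phiB).
by rewrite (kbilinDr phiB) (kbilinZr phiB).
Qed.

Definition PsiX1 (f : V -> V) (u : X) : X := (0, f u.2).

Definition counit2 (u v : X) : k^o := u.1 * v.1.

Lemma counit2_kbilin : kbilin counit2.
Proof.
by split=> [w a u v|u a v w]; rewrite /counit2 /= ?mulrDl ?mulrDr -?mulrA // mulrCA.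
Qed.

Definition tensor_snd (l1 l2 : V -> k^o) (u v : X) : k^o := l1 u.2 * l2 v.2.

Lemma tensor_snd_kbilin l1 l2 : klin l1 -> klin l2 -> kbilin (tensor_snd l1 l2).
Proof.
move=> l1_lin l2_lin; split=> [w a u v|u a v w]; rewrite /tensor_snd /=.
  by rewrite l1_lin mulrDl -mulrA.
by rewrite l2_lin mulrDr mulrCA.
Qed.

Lemma bsd_C1_fst (F : X -> X) x : bsd_C1 F -> (F (0, x)).1 = 0.
Proof.
case=> _ F_C1; have := F_C1 (0, x) _ counit2_kbilin.
rewrite /DeltaX /= !big_cons !big_nil /counit2 /=.
by rewrite ?(mulr0, mul0r, mulr1, mul1r, addr0, add0r) => /addr_eq_self.
Qed.

Variable br : V -> V -> V.
Hypothesis br_lie : is_lie_bracket br.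

Let br_bilin : kbilin br. Proof. by case: br_lie. Qed.
Let br_alt x : br x x = 0. Proof. by case: br_lie => _ []. Qed.
Let br_anti := kbilin_anti br_bilin br_alt.
Let br0l := kbilin0l br_bilin.
Let br0r := kbilin0r br_bilin.

Ltac simp_sd := rewrite ?(mulr0, mul0r, mulr1, mul1r, scale0r, scaler0, scale1r,
  addr0, add0r, br0l, br0r) /=.

Lemma bsd_C2_PsiX (phi : V -> V -> V) : kbilin phi -> bsd_C2 br (PsiX phi).
Proof.
move=> phiB; split; first exact/PsiX_kbilin.
move=> u v B BB; rewrite /DeltaX /= !big_cons !big_nil /PsiX /qX /unitX /=.
rewrite !(kbilin0l phiB) !(kbilin0r phiB); simp_sd.
by rewrite !(kbilin0l BB) !(kbilin0r BB) !add0r.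
Qed.

Lemma bsd_delta2_PsiX (phi : V -> V -> V) (u v w : X) : kbilin phi ->
  bsd_delta2 br (PsiX phi) u v w =
    (0, br (phi u.2 v.2) w.2 + phi (br u.2 v.2) w.2 - phi (br u.2 w.2) v.2
        - br (phi u.2 w.2) v.2 - phi u.2 (br v.2 w.2) - br u.2 (phi v.2 w.2)).
Proof.
move=> phiB; rewrite /bsd_delta2 /DeltaX !big_cons !big_nil /PsiX /qX /unitX /=.
apply: injective_projections => /=; first by rewrite ?(mulr0, mul0r, addr0, oppr0).
rewrite !(kbilin0r phiB); simp_sd; rewrite !(kbilinDl phiB) !(kbilinZl phiB).
zmod_eq.
Qed.

Lemma bsd_delta2_PsiX_lie (phi : V -> V -> V) u v w : lie_cochain2 phi ->
  bsd_delta2 br (PsiX phi) u v w = (0, lie_delta2 br phi u.2 v.2 w.2).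
Proof.
case=> phiB phi_alt; have phi_anti := kbilin_anti phiB phi_alt.
rewrite bsd_delta2_PsiX // /lie_delta2; congr pair.
rewrite (br_anti u.2 (phi v.2 w.2)) (phi_anti u.2 w.2) (phi_anti u.2 (br v.2 w.2)).
rewrite (br_anti u.2 w.2) (kbilinNl br_bilin) (kbilinNl phiB).
zmod_eq.
Qed.

Lemma lie_cocycle_PsiX (phi : V -> V -> V) :
  lie_cocycle br phi -> bsd_cocycle br (PsiX phi).
Proof.
case=> phi_cochain phi_cocycle; split; first exact: bsd_C2_PsiX phi_cochain.1.
by move=> u v w; rewrite bsd_delta2_PsiX_lie // phi_cocycle.
Qed.

Lemma PsiX_cocycle_lie (phi : V -> V -> V) : trivial_center br -> kbilin phi ->
  bsd_cocycle br (PsiX phi) -> lie_cocycle br phi.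
Proof.
move=> tc phiB [_ cocycle].
have phi_alt y : phi y y = 0.
  apply: tc => x; have := cocycle (0, x) (0, y) (0, y).
  rewrite bsd_delta2_PsiX //= br_alt (kbilin0r phiB) => /(congr1 snd) /= E.
  by rewrite br_anti; zmod_eq_from E.
split=> // x y z; have /(congr1 snd) := cocycle (0, x) (0, y) (0, z).
by rewrite bsd_delta2_PsiX_lie.
Qed.

Lemma bsd_C1_PsiX1 f : klin f -> bsd_C1 (PsiX1 f).
Proof.
move=> f_lin; split.
  by move=> a u v; apply: injective_projections; rewrite /PsiX1 /= ?scaler0 ?addr0.
move=> u B BB; rewrite /DeltaX /= !big_cons !big_nil /PsiX1 /= (klin0 f_lin).
by rewrite !(kbilin0l BB) !(kbilin0r BB) !add0r.
Qed.

Lemma bsd_delta1_PsiX1 f u v : klin f ->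
  bsd_delta1 br (PsiX1 f) u v = PsiX (lie_delta1 br f) u v.
Proof.
move=> f_lin; apply: injective_projections; rewrite /PsiX /PsiX1 /bsd_delta1 /qX /=.
  by rewrite mul0r mulr0 !subr0.
rewrite (klinD f_lin) (klinZ f_lin) scale0r add0r /lie_delta1.
zmod_eq.
Qed.

Lemma lie_coboundary_PsiX (phi : V -> V -> V) :
  lie_coboundary br phi -> bsd_coboundary br (PsiX phi).
Proof.
case=> f [f_lin fE]; exists (PsiX1 f); split; first exact: bsd_C1_PsiX1.
by move=> u v; rewrite bsd_delta1_PsiX1 // /PsiX fE.
Qed.

Lemma bsd_coboundary0 : bsd_coboundary br (fun _ _ => 0).
Proof.
have [|F [F_C1 FE]] := @lie_coboundary_PsiX (fun _ _ => 0).
  exists (fun _ => 0); split; first by move=> a u v; rewrite scaler0 addr0.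
  by move=> x y; rewrite /lie_delta1 br0l br0r !subr0.
by exists F; split=> // u v; rewrite -FE.
Qed.

Lemma bsd_coboundary_PsiX (phi : V -> V -> V) :
  bsd_coboundary br (PsiX phi) -> lie_coboundary br phi.
Proof.
case=> F [F_C1 FE]; exists (fun x => (F (0, x)).2); split=> [a x y|x y].
  by rewrite pair0_linear (klinD F_C1.1) (klinZ F_C1.1).
have /(congr1 snd) := FE (0, x) (0, y); rewrite /PsiX /bsd_delta1 /qX /= bsd_C1_fst //.
by rewrite !mul0r !scale0r !add0r.
Qed.

Section CocycleNormalForm.
Variable psi : X -> X -> X.
Hypothesis psi_cocycle : bsd_cocycle br psi.

Let psiB : kbilin psi. Proof. by case: psi_cocycle => [[]]. Qed.
Let psi_C2 : bsd_C2 br psi. Proof. by case: psi_cocycle. Qed.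
Let psi_delta2 : forall u v w, bsd_delta2 br psi u v w = 0.
Proof. by case: psi_cocycle. Qed.

Lemma bsd_cocycle_fst u v : (psi u v).1 = 0.
Proof.
have := psi_C2.2 u v _ counit2_kbilin.
rewrite /DeltaX /= !big_cons !big_nil /counit2 /qX /unitX /=.
rewrite ?(mulr0, mul0r, mulr1, mul1r, addr0, add0r) => /addr_eq_self <-.
by rewrite {1}(kbilin_decompX u v psiB) /= scalerDr scalerA -!addrA.
Qed.

Ltac delta2_snd u v w :=
  have /(congr1 snd) := psi_delta2 u v w;
  rewrite /bsd_delta2 /DeltaX !big_cons !big_nil /qX /unitX /=;
  do 2 (rewrite ?(kbilin0l psiB, kbilin0r psiB, bsd_cocycle_fst); simp_sd).

Hypothesis tc : trivial_center br.

Lemma bsd_cocycle_unit_unit : psi e e = 0.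
Proof.
apply: injective_projections; first exact: bsd_cocycle_fst.
by apply: tc => z; delta2_snd (e : X) (e : X) ((0, z) : X); rewrite addrK.
Qed.

(* For w := psi(1,y).2, comultiplicativity only says that w (x) x + x (x) w = 0 in
   V (x) V for every x.  If w <> 0, trivial center yields x with [w,x] <> 0, hence
   independent of w, and functionals separating w and x turn this into 1 = 0. *)
Lemma bsd_cocycle_unit_pair0 y : psi e (0, y) = 0.
Proof.
apply: injective_projections; first exact: bsd_cocycle_fst.
set w := (psi e (0, y)).2.
have sym (l1 l2 : V -> k^o) x :
    klin l1 -> klin l2 -> l1 x * l2 w + l1 w * l2 x = 0.
  move=> l1_lin l2_lin.
  have := psi_C2.2 (0, x) (0, y) _ (tensor_snd_kbilin l1_lin l2_lin).
  rewrite /DeltaX /= !big_cons !big_nil /tensor_snd /qX /unitX /=.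
  rewrite bsd_cocycle_unit_unit; simp_sd.
  by rewrite ?(mulr0, mul0r, addr0, add0r, klin0 l1_lin, klin0 l2_lin) -/w => /esym.
have [//|w_neq0] := eqVneq w 0.
have [x wx_neq0] : exists x, br w x <> 0.
  by apply/existsNP => wx0; move/eqP: w_neq0; apply; apply: tc.
have x_indep (c : k) : x != c *: w.
  by apply: contra_notN wx_neq0 => /eqP ->; rewrite (kbilinZr br_bilin) br_alt scaler0.
have [l1 [l1_lin l1w]] := exists_functional w_neq0.
have [l [l_lin lw lx]] := exists_functional_indep w_neq0 x_indep.
have := sym l1 l x l1_lin l_lin; rewrite lw lx l1w mulr0 mul1r add0r => /eqP.
by rewrite oner_eq0.
Qed.

Lemma bsd_cocycle_pair0_unit x : psi (0, x) e = 0.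
Proof.
apply: injective_projections; first exact: bsd_cocycle_fst.
pose n y := (psi (0, y) e).2.
have n_br x' z : br (n x') z = n (br x' z).
  delta2_snd ((0, x') : X) (e : X) ((0, z) : X).
  rewrite bsd_cocycle_unit_unit bsd_cocycle_unit_pair0; simp_sd.
  by move=> E; zmod_eq_from E.
have n_der x' y : n (br x' y) = br (n x') y + br x' (n y).
  by delta2_snd ((0, x') : X) ((0, y) : X) (e : X) => E; zmod_eq_from E.
apply: tc => z; rewrite br_anti.
by have := n_der z x; rewrite -n_br => /addr_eq_self ->; rewrite oppr0.
Qed.

Lemma bsd_cocycle_PsiX : psi = PsiX (fun x y => (psi (0, x) (0, y)).2).
Proof.
apply/funext => u; apply/funext => v; rewrite (kbilin_decompX u v psiB).
rewrite bsd_cocycle_unit_unit bsd_cocycle_unit_pair0 bsd_cocycle_pair0_unit.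
rewrite ?(scaler0, addr0, add0r); apply: injective_projections => //=.
exact: bsd_cocycle_fst.
Qed.

End CocycleNormalForm.

End BinarySD.

Unset Implicit Arguments.

Theorem mainTheorem6 (k : fieldType) (V : lmodType k) (br : V -> V -> V)
  (Hlie : is_lie_bracket br) :
  (* Psi^2 is well defined on cohomology: cocycles to cocycles ... *)
  (forall phi : V -> V -> V, lie_cocycle br phi -> bsd_cocycle br (PsiX phi)) /\
  (* ... and coboundaries to coboundaries *)
  (forall phi : V -> V -> V, lie_coboundary br phi -> bsd_coboundary br (PsiX phi)) /\
  (* injectivity *)
  (forall phi : V -> V -> V, lie_cocycle br phi ->
     bsd_coboundary br (PsiX phi) -> lie_coboundary br phi) /\
  (* surjectivity when the center is trivial *)
  (trivial_center br ->
     forall psi : SDX V -> SDX V -> SDX V, bsd_cocycle br psi ->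
       exists phi : V -> V -> V, lie_cocycle br phi /\
         bsd_coboundary br (fun u v => psi u v - PsiX phi u v)).
Proof.
split; first exact: lie_cocycle_PsiX.
split; first exact: lie_coboundary_PsiX.
split; first by move=> phi _; apply: bsd_coboundary_PsiX.
move=> tc psi psi_cocycle; have psiE := bsd_cocycle_PsiX Hlie psi_cocycle tc.
set phi := fun x y => _ in psiE; exists phi; split.
  apply: (PsiX_cocycle_lie Hlie tc); last by rewrite -psiE.
  by apply/PsiX_kbilin; rewrite -psiE; case: psi_cocycle => [[]].
rewrite psiE; have -> : (fun u v => PsiX phi u v - PsiX phi u v) = (fun _ _ => 0).
  by apply/funext => u; apply/funext => v; rewrite subrr.
exact: bsd_coboundary0.
Qed.
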